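(* Let $m\ge1$ and $n\ge2$ be integers, and let $p_{m,r}(n)$, $0\le r\le m$, be the unique numbers such that $S(m,n,\alpha)=\sum_{r=0}^m p_{m,r}(n)\cot^r\alpha$ for all real $\alpha\notin\pi\mathbb{Z}$. Then $$p_{2m,0}(n)=S(2m,n,\pi/2),$$ and for $1\le r\le m$, $$p_{m,r}(n)=\frac{1}{r\,(m-1)!}\sum_{k=r}^m n^kA_m^{(k)}T_k^{(r)}.$$
   Context: $S(m,n,\alpha)=\sum_{k=0}^{n-1}\cot^m\frac{\alpha+k\pi}{n}$, which is a polynomial of degree at most $m$ in $\cot\alpha$. The arctangent numbers $A_m^{(k)}$ are defined by $\frac{(\arctan z)^k}{k!}=\sum_{m\ge k}\frac{A_m^{(k)}}{m!}z^m$. The higher-order tangent numbers $T_k^{(r)}$ are defined by $\tan^r z=\sum_{k\ge r}\frac{T_k^{(r)}}{k!}z^k$. *)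

From Stdlib Require Import Reals Lra Lia List.
From Coquelicot Require Import Coquelicot.
Open Scope R_scope.

Definition cot (x : R) : R := cos x / sin x.

(* finite sum  sum_{k=a}^{b} f k  (empty, i.e. 0, if b < a) *)
Definition Rsum_range (f : nat -> R) (a b : nat) : R :=
  List.fold_right Rplus 0 (List.map f (List.seq a (S b - a))).

Definition Scot (m n : nat) (alpha : R) : R :=
  List.fold_right Rplus 0
    (List.map (fun k => (cot ((alpha + INR k * PI) / INR n)) ^ m) (List.seq 0 n)).

(* Arctangent numbers: (arctan z)^k / k! = sum_{m>=k} A_m^(k) z^m / m!,
   i.e. A_m^(k) is m! times the m-th Taylor coefficient at 0, which is the
   m-th derivative at 0 of (arctan z)^k / k!. *)
Definition arctan_num (m k : nat) : R :=
  Derive_n (fun z => (atan z) ^ k / INR (Factorial.fact k)) m 0.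

(* Higher-order tangent numbers: tan^r z = sum_{k>=r} T_k^(r) z^k / k!. *)
Definition tan_num (k r : nat) : R :=
  Derive_n (fun z => (tan z) ^ r) k 0.

Definition is_cot_coeffs (m n : nat) (p : nat -> R) : Prop :=
  forall alpha : R, (forall z : Z, alpha <> IZR z * PI) ->
    Scot m n alpha = Rsum_range (fun r => p r * (cot alpha) ^ r) 0 m.

From Stdlib Require Import Reals Lra Lia List.
From Coquelicot Require Import Coquelicot.
Open Scope R_scope.

(* Let [theta_k = (alpha + k PI) / n], [x = cot alpha] and [t z = tan (n atan z)].
   Summing over the [n]-th roots of unity gives [sum_k cot (theta_k - w) = n cot (alpha - n w)];
   at [w = atan z], and since [t' = n (1 + t^2) / (1 + z^2)], this is the generating function
     [sum_k 1 / (1 - z cot theta_k) = n (1 + z t) / (1 + z^2) + z t' x / (1 - x t)].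
   Expanding [x / (1 - x t) = sum_(r>=1) x^r t^(r-1)] and using [r t^(r-1) t' = (t^r)'], the
   coefficient of [z^m] reads [S(m, n, alpha) = c + sum_(r=1..m) (m / r) [z^m](t^r) x^r] with [c]
   independent of [alpha].  Hence [p_(m,r)(n) = (m / r) [z^m] tan^r (n atan z)], and the chain rule
   for Taylor coefficients at 0 (Faa di Bruno) turns this into tangent and arctangent numbers.
   Power series only enter through finite expansions [f z = sum_(j<=M) c_j z^j + O(z^(M+1))],
   whose coefficients are unique.  [p_(2m,0)(n)] is the value at [alpha = PI / 2], where
   [cot alpha = 0]. *)

(** * Polynomial expansions at 0 *)

Definition peval (c : nat -> R) (M : nat) (z : R) : R :=
  sum_f_R0 (fun j => c j * z ^ j) M.

Definition expansion (f : R -> R) (M : nat) (c : nat -> R) : Prop :=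
  exists K d, 0 < d /\ forall z, Rabs z < d ->
    Rabs (f z - peval c M z) <= K * Rabs z ^ S M.

Lemma Rabs_pow_le_1 z j : Rabs z <= 1 -> Rabs z ^ j <= 1.
Proof.
  intros Hz. rewrite <- (pow1 j). apply pow_incr. split; [apply Rabs_pos | exact Hz].
Qed.

Lemma Rabs_pow_antimono z i j : Rabs z <= 1 -> (i <= j)%nat -> Rabs z ^ j <= Rabs z ^ i.
Proof.
  intros Hz Hij. replace j with (i + (j - i))%nat by lia. rewrite pow_add.
  assert (0 <= Rabs z ^ i) by (apply pow_le, Rabs_pos).
  assert (Rabs z ^ (j - i) <= 1) by (apply Rabs_pow_le_1; exact Hz).
  nra.
Qed.

Lemma sum_Rabs_nonneg (c : nat -> R) M : 0 <= sum_f_R0 (fun j => Rabs (c j)) M.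
Proof. apply cond_pos_sum. intros; apply Rabs_pos. Qed.

Lemma peval_bound c M z : Rabs z <= 1 ->
  Rabs (peval c M z) <= sum_f_R0 (fun j => Rabs (c j)) M.
Proof.
  intros Hz. eapply Rle_trans; [apply sum_f_R0_triangle|].
  apply sum_Rle. intros j _. rewrite Rabs_mult, <- RPow_abs.
  assert (Rabs z ^ j <= 1) by (apply Rabs_pow_le_1; exact Hz).
  assert (0 <= Rabs (c j)) by apply Rabs_pos.
  assert (0 <= Rabs z ^ j) by (apply pow_le, Rabs_pos). nra.
Qed.

Lemma peval_plus a b M z : peval (fun j => a j + b j) M z = peval a M z + peval b M z.
Proof. unfold peval. rewrite <- plus_sum. apply sum_eq. intros; ring. Qed.

Lemma peval_minus a b M z : peval (fun j => a j - b j) M z = peval a M z - peval b M z.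
Proof. unfold peval. rewrite <- minus_sum. apply sum_eq. intros; ring. Qed.

Lemma peval_scal k a M z : peval (fun j => k * a j) M z = k * peval a M z.
Proof. unfold peval. rewrite scal_sum. apply sum_eq. intros; ring. Qed.

Lemma peval_S c M z : peval c (S M) z = c 0%nat + z * peval (fun j => c (S j)) M z.
Proof.
  unfold peval. rewrite decomp_sum by lia. simpl Init.Nat.pred. rewrite scal_sum.
  f_equal; [simpl; ring | apply sum_eq; intros; simpl; ring].
Qed.

Lemma peval_0 c M : peval c M 0 = c 0%nat.
Proof. destruct M; [unfold peval; simpl; ring | rewrite peval_S; ring]. Qed.

Lemma peval_ext c c' M z : (forall j, (j <= M)%nat -> c j = c' j) -> peval c M z = peval c' M z.
Proof. intros H. apply sum_eq. intros j Hj. rewrite H; auto. Qed.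

Lemma peval_zero M z : peval (fun _ => 0) M z = 0.
Proof. apply sum_eq_R0. intros; ring. Qed.

Lemma expansion_nonneg_constant f M c : expansion f M c ->
  exists K d, 0 <= K /\ 0 < d /\ forall z, Rabs z < d ->
    Rabs (f z - peval c M z) <= K * Rabs z ^ S M.
Proof.
  intros [K [d [Hd H]]]. exists (Rabs K), d. repeat split; [apply Rabs_pos | exact Hd |].
  intros z Hz. eapply Rle_trans; [apply H, Hz|].
  apply Rmult_le_compat_r; [apply pow_le, Rabs_pos | apply RRle_abs].
Qed.

Lemma expansion_approx f h M c : expansion h M c ->
  (exists K d, 0 < d /\ forall z, Rabs z < d -> Rabs (f z - h z) <= K * Rabs z ^ S M) ->
  expansion f M c.
Proof.
  intros Hh [K2 [d2 [Hd2 H2]]].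
  destruct (expansion_nonneg_constant _ _ _ Hh) as [K1 [d1 [HK1 [Hd1 H1]]]].
  exists (K1 + K2), (Rmin d1 d2). split; [apply Rmin_pos; assumption|].
  intros z Hz. pose proof (Rmin_l d1 d2). pose proof (Rmin_r d1 d2).
  replace (f z - peval c M z) with ((h z - peval c M z) + (f z - h z)) by ring.
  eapply Rle_trans; [apply Rabs_triang|].
  specialize (H1 z ltac:(lra)). specialize (H2 z ltac:(lra)). lra.
Qed.

Lemma expansion_ext_near f g M c c' : expansion f M c ->
  (exists d, 0 < d /\ forall z, Rabs z < d -> f z = g z) ->
  (forall j, (j <= M)%nat -> c j = c' j) -> expansion g M c'.
Proof.
  intros [K [d1 [Hd1 H1]]] [d [Hd H]] Hc.
  exists K, (Rmin d d1). split; [apply Rmin_pos; assumption|].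
  intros z Hz. pose proof (Rmin_l d d1). pose proof (Rmin_r d d1).
  rewrite <- H, <- (peval_ext c c') by (auto; lra). apply H1. lra.
Qed.

Lemma expansion_plus f g M a b : expansion f M a -> expansion g M b ->
  expansion (fun z => f z + g z) M (fun j => a j + b j).
Proof.
  intros Hf Hg.
  destruct (expansion_nonneg_constant _ _ _ Hf) as [K1 [d1 [HK1 [Hd1 H1]]]].
  destruct (expansion_nonneg_constant _ _ _ Hg) as [K2 [d2 [HK2 [Hd2 H2]]]].
  exists (K1 + K2), (Rmin d1 d2). split; [apply Rmin_pos; assumption|].
  intros z Hz. pose proof (Rmin_l d1 d2). pose proof (Rmin_r d1 d2).
  rewrite peval_plus.
  replace (f z + g z - (peval a M z + peval b M z))
    with ((f z - peval a M z) + (g z - peval b M z)) by ring.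
  eapply Rle_trans; [apply Rabs_triang|].
  specialize (H1 z ltac:(lra)). specialize (H2 z ltac:(lra)). lra.
Qed.

Lemma expansion_scal f M a k : expansion f M a ->
  expansion (fun z => k * f z) M (fun j => k * a j).
Proof.
  intros [K [d [Hd H]]]. exists (Rabs k * K), d. split; [exact Hd|]. intros z Hz.
  rewrite peval_scal, <- Rmult_minus_distr_l, Rabs_mult, Rmult_assoc.
  apply Rmult_le_compat_l; [apply Rabs_pos | apply H, Hz].
Qed.

Lemma expansion_sum M N (F : nat -> R -> R) (c : nat -> nat -> R) :
  (forall k, (k <= N)%nat -> expansion (F k) M (c k)) ->
  expansion (fun z => sum_f_R0 (fun k => F k z) N) M (fun j => sum_f_R0 (fun k => c k j) N).
Proof.
  induction N; intros H; simpl.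
  - apply H; lia.
  - apply expansion_plus; [apply IHN; intros; apply H|apply H]; lia.
Qed.

Lemma expansion_shift f M c : expansion f M c ->
  expansion (fun z => z * f z) (S M) (fun j => match j with 0%nat => 0 | S i => c i end).
Proof.
  intros Hf. destruct (expansion_nonneg_constant _ _ _ Hf) as [K [d [HK [Hd H]]]].
  exists K, d. split; [exact Hd|]. intros z Hz.
  rewrite peval_S, (peval_ext _ c) by auto.
  replace (z * f z - (0 + z * peval c M z)) with (z * (f z - peval c M z)) by ring.
  rewrite Rabs_mult.
  replace (K * Rabs z ^ S (S M)) with (Rabs z * (K * Rabs z ^ S M)) by (simpl; ring).
  apply Rmult_le_compat_l; [apply Rabs_pos | apply H, Hz].
Qed.

Lemma expansion_bigO f M :
  (exists K d, 0 < d /\ forall z, Rabs z < d -> Rabs (f z) <= K * Rabs z ^ S M) ->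
  expansion f M (fun _ => 0).
Proof.
  intros [K [d [Hd H]]]. exists K, d. split; [exact Hd|].
  intros z Hz. rewrite peval_zero, Rminus_0_r. apply H, Hz.
Qed.

Lemma le_linear_near0_eq0 a K d : 0 < d -> (forall z, 0 < z < d -> Rabs a <= K * z) -> a = 0.
Proof.
  intros Hd H. destruct (Req_dec a 0) as [|Ha]; [assumption|exfalso].
  assert (Hpa : 0 < Rabs a) by (apply Rabs_pos_lt; exact Ha).
  pose proof (Rabs_pos K).
  set (w := Rabs a / (2 * (Rabs K + 1))).
  assert (Hw : w * (2 * (Rabs K + 1)) = Rabs a) by (unfold w; field; lra).
  assert (0 < w) by (unfold w; apply Rdiv_lt_0_compat; lra).
  set (z := Rmin (d / 2) w).
  assert (z <= d / 2) by apply Rmin_l. assert (z <= w) by apply Rmin_r.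
  assert (0 < z) by (apply Rmin_pos; lra).
  specialize (H z ltac:(lra)).
  assert (K * z <= Rabs K * z) by (apply Rmult_le_compat_r; [lra | apply RRle_abs]).
  assert (Rabs K * z <= Rabs K * w) by (apply Rmult_le_compat_l; lra).
  nra.
Qed.

Lemma peval_small_coeffs_zero M c :
  (exists K d, 0 < d /\ forall z, 0 < Rabs z < d -> Rabs (peval c M z) <= K * Rabs z ^ S M) ->
  forall j, (j <= M)%nat -> c j = 0.
Proof.
  revert c. induction M as [|M IH]; intros c [K [d [Hd H]]] j Hj.
  - replace j with 0%nat by lia. apply (le_linear_near0_eq0 _ K d Hd). intros z Hz.
    assert (Hza : Rabs z = z) by (apply Rabs_pos_eq; lra).
    specialize (H z). unfold peval in H. simpl in H. rewrite Hza, !Rmult_1_r in H.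
    apply H. lra.
  - set (B := sum_f_R0 (fun j => Rabs (c (S j))) M).
    assert (HB : 0 <= B) by apply sum_Rabs_nonneg.
    assert (Hc0 : c 0%nat = 0).
    { apply (le_linear_near0_eq0 _ (Rabs K + B) (Rmin d 1)); [apply Rmin_pos; lra|].
      intros z Hz. pose proof (Rmin_l d 1). pose proof (Rmin_r d 1).
      assert (Hza : Rabs z = z) by (apply Rabs_pos_eq; lra).
      specialize (H z ltac:(lra)). rewrite peval_S, Hza in H.
      assert (Rabs (peval (fun j => c (S j)) M z) <= B) by (apply peval_bound; lra).
      replace (c 0%nat) with ((c 0%nat + z * peval (fun j => c (S j)) M z)
                              - z * peval (fun j => c (S j)) M z) by ring.
      eapply Rle_trans; [apply Rabs_triang|]. rewrite Rabs_Ropp, Rabs_mult, Hza.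
      assert (z ^ S (S M) <= z).
      { pose proof (Rabs_pow_antimono z 1 (S (S M)) ltac:(lra) ltac:(lia)) as Hp.
        rewrite Hza, pow_1 in Hp. exact Hp. }
      assert (K * z ^ S (S M) <= Rabs K * z).
      { apply Rle_trans with (Rabs K * z ^ S (S M)).
        - apply Rmult_le_compat_r; [apply pow_le; lra | apply RRle_abs].
        - apply Rmult_le_compat_l; [apply Rabs_pos | assumption]. }
      nra. }
    destruct j as [|j]; [exact Hc0|].
    apply (IH (fun j => c (S j))); [|lia].
    exists K, d. split; [exact Hd|]. intros z Hz. specialize (H z Hz).
    rewrite peval_S, Hc0, Rplus_0_l, Rabs_mult in H.
    replace (Rabs z ^ S (S M)) with (Rabs z * Rabs z ^ S M) in H by (simpl; ring).
    apply (Rmult_le_reg_l (Rabs z)); [lra | nra].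
Qed.

Lemma expansion_unique f M a b : expansion f M a -> expansion f M b ->
  forall j, (j <= M)%nat -> a j = b j.
Proof.
  intros Ha Hb j Hj.
  destruct (expansion_nonneg_constant _ _ _ Ha) as [K1 [d1 [HK1 [Hd1 H1]]]].
  destruct (expansion_nonneg_constant _ _ _ Hb) as [K2 [d2 [HK2 [Hd2 H2]]]].
  apply Rminus_diag_uniq.
  apply (peval_small_coeffs_zero M (fun j => a j - b j)); [|exact Hj].
  exists (K1 + K2), (Rmin d1 d2). split; [apply Rmin_pos; assumption|]. intros z Hz.
  pose proof (Rmin_l d1 d2). pose proof (Rmin_r d1 d2).
  rewrite peval_minus.
  replace (peval a M z - peval b M z) with ((f z - peval b M z) - (f z - peval a M z)) by ring.
  eapply Rle_trans; [apply Rabs_triang|]. rewrite Rabs_Ropp.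
  specialize (H1 z ltac:(lra)). specialize (H2 z ltac:(lra)). lra.
Qed.

Lemma polynomial_coeffs_unique (p q : nat -> R) M :
  (forall x, peval p M x = peval q M x) -> forall r, (r <= M)%nat -> p r = q r.
Proof.
  intros H r Hr. apply Rminus_diag_uniq.
  apply (peval_small_coeffs_zero M (fun r => p r - q r)); [|exact Hr].
  exists 0, 1. split; [lra|]. intros z _.
  rewrite peval_minus, H, Rminus_diag, Rabs_R0. lra.
Qed.

Lemma expansion_comp_bound f g M a : expansion f M a ->
  (exists L d, 0 < d /\ forall z, Rabs z < d -> Rabs (g z) <= L * Rabs z) ->
  exists K d, 0 < d /\ forall z, Rabs z < d ->
    Rabs (f (g z) - peval a M (g z)) <= K * Rabs z ^ S M.
Proof.
  intros Hf [L [d2 [Hd2 H2]]].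
  destruct (expansion_nonneg_constant _ _ _ Hf) as [K [d1 [HK [Hd1 H1]]]].
  pose proof (Rabs_pos L) as HL.
  exists (K * Rabs L ^ S M), (Rmin d2 (d1 / (Rabs L + 1))).
  split; [apply Rmin_pos; [|apply Rdiv_lt_0_compat]; lra|].
  intros z Hz. pose proof (Rmin_l d2 (d1 / (Rabs L + 1))).
  pose proof (Rmin_r d2 (d1 / (Rabs L + 1))). pose proof (Rabs_pos z).
  assert (HgL : Rabs (g z) <= Rabs L * Rabs z).
  { eapply Rle_trans; [apply H2; lra|].
    apply Rmult_le_compat_r; [apply Rabs_pos | apply RRle_abs]. }
  assert (Rabs z * (Rabs L + 1) < d1).
  { apply (Rmult_lt_reg_r (/ (Rabs L + 1))); [apply Rinv_0_lt_compat; lra|].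
    rewrite Rmult_assoc, Rinv_r by lra. unfold Rdiv in *. lra. }
  eapply Rle_trans; [apply H1; nra|].
  rewrite Rmult_assoc. apply Rmult_le_compat_l; [exact HK|].
  rewrite <- Rpow_mult_distr. apply pow_incr. split; [apply Rabs_pos | exact HgL].
Qed.

Lemma geometric_sum w M : w <> 1 -> sum_f_R0 (fun j => w ^ j) M = (1 - w ^ S M) / (1 - w).
Proof.
  intros Hw. pose proof (GP_finite w M) as G. rewrite Nat.add_1_r in G.
  apply (Rmult_eq_reg_r (1 - w)); [|lra].
  unfold Rdiv. rewrite Rmult_assoc, Rinv_l by lra. lra.
Qed.

Lemma expansion_geometric t M : expansion (fun z => / (1 - z * t)) M (fun j => t ^ j).
Proof.
  pose proof (Rabs_pos t) as Ht.
  exists (2 * Rabs t ^ S M), (/ (2 * Rabs t + 1)). split; [apply Rinv_0_lt_compat; lra|].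
  intros z Hz. pose proof (Rabs_pos z).
  assert (Hzt : Rabs (z * t) <= 1 / 2).
  { rewrite Rabs_mult. assert (Rabs z * (2 * Rabs t + 1) < 1).
    { apply (Rmult_lt_reg_r (/ (2 * Rabs t + 1))); [apply Rinv_0_lt_compat; lra|].
      rewrite Rmult_assoc, Rinv_r by lra. lra. }
    nra. }
  assert (Hw : z * t <> 1) by (intros E; rewrite E, Rabs_R1 in Hzt; lra).
  assert (Hd : 1 / 2 <= Rabs (1 - z * t)).
  { pose proof (Rabs_triang_inv 1 (z * t)). rewrite Rabs_R1 in *. lra. }
  unfold peval.
  rewrite (sum_eq _ (fun j => (z * t) ^ j)) by (intros; rewrite Rpow_mult_distr; ring).
  rewrite geometric_sum by exact Hw.
  replace (/ (1 - z * t) - (1 - (z * t) ^ S M) / (1 - z * t))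
    with ((z * t) ^ S M / (1 - z * t)) by (field; lra).
  unfold Rdiv. rewrite Rabs_mult, Rabs_inv, <- RPow_abs, Rabs_mult, Rpow_mult_distr.
  assert (/ Rabs (1 - z * t) <= 2).
  { replace 2 with (/ (1 / 2)) by field. apply Rinv_le_contravar; lra. }
  assert (0 <= Rabs z ^ S M * Rabs t ^ S M) by (apply Rmult_le_pos; apply pow_le; lra).
  assert (0 < / Rabs (1 - z * t)) by (apply Rinv_0_lt_compat; lra).
  nra.
Qed.

(** * Smooth functions *)

Definition derivable_upto (U : R -> Prop) (f : R -> R) (k : nat) : Prop :=
  forall x, U x -> forall j, (j <= k)%nat -> ex_derive_n f j x.

Definition smooth_on (U : R -> Prop) (f : R -> R) : Prop := forall k, derivable_upto U f k.

Lemma open_Rabs_lt d : open (fun y => Rabs y < d).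
Proof.
  apply (open_ext (fun y => -d < y /\ y < d)); [|apply open_and; [apply open_gt|apply open_lt]].
  intros y. split; intros H; [apply Rabs_def1 | apply Rabs_def2 in H]; lra.
Qed.

Lemma Derive_n_Derive f j x : Derive_n (Derive f) j x = Derive_n f (S j) x.
Proof.
  revert x. induction j as [|j IH]; intros x; [reflexivity|].
  simpl. apply Derive_ext. intros t. apply IH.
Qed.

Lemma ex_derive_n_Derive f j x : ex_derive_n f (S j) x -> ex_derive_n (Derive f) j x.
Proof.
  destruct j as [|j]; [intros; exact I|]. intros H.
  eapply ex_derive_ext; [|exact H]. intros t. symmetry. apply Derive_n_Derive.
Qed.

Lemma ex_derive_n_S f j x : ex_derive f x -> ex_derive_n (Derive f) j x -> ex_derive_n f (S j) x.
Proof.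
  destruct j as [|j]; intros Hf H; [exact Hf|].
  eapply ex_derive_ext; [|exact H]. intros t. apply Derive_n_Derive.
Qed.

Section DerivableUpto.

Variable U : R -> Prop.
Hypothesis HU : open U.

Lemma derivable_upto_le f k k' : (k' <= k)%nat -> derivable_upto U f k -> derivable_upto U f k'.
Proof. intros Hk H x Hx j Hj. apply H; [exact Hx | lia]. Qed.

Lemma derivable_upto_Derive f k : derivable_upto U f (S k) -> derivable_upto U (Derive f) k.
Proof. intros H x Hx j Hj. apply ex_derive_n_Derive, H; [exact Hx | lia]. Qed.

Lemma derivable_upto_S f h k : (forall x, U x -> ex_derive f x) ->
  (forall x, U x -> Derive f x = h x) -> derivable_upto U h k -> derivable_upto U f (S k).
Proof.
  intros Hd HD Hh x Hx [|j] Hj; [exact I|].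
  apply ex_derive_n_S; [apply Hd, Hx|].
  apply ex_derive_n_ext_loc with h; [|apply Hh; [exact Hx | lia]].
  apply (locally_open U); [exact HU | | exact Hx]. intros y Hy. symmetry. apply HD, Hy.
Qed.

Lemma derivable_upto_ext f g k : (forall t, f t = g t) ->
  derivable_upto U f k -> derivable_upto U g k.
Proof. intros E H x Hx j Hj. eapply ex_derive_n_ext; [exact E | apply H; assumption]. Qed.

Lemma derivable_upto_plus f g k : derivable_upto U f k -> derivable_upto U g k ->
  derivable_upto U (fun x => f x + g x) k.
Proof.
  intros Hf Hg x Hx j Hj.
  apply ex_derive_n_plus; apply (locally_open U); try assumption;
    intros y Hy i Hi; [apply Hf | apply Hg]; (assumption || lia).
Qed.

Lemma derivable_upto_mult k : forall f g, derivable_upto U f k -> derivable_upto U g k ->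
  derivable_upto U (fun x => f x * g x) k.
Proof.
  induction k as [|k IH]; intros f g Hf Hg.
  - intros x Hx j Hj. replace j with 0%nat by lia. exact I.
  - assert (Hf1 : forall x, U x -> ex_derive f x) by (intros x Hx; apply (Hf x Hx 1%nat); lia).
    assert (Hg1 : forall x, U x -> ex_derive g x) by (intros x Hx; apply (Hg x Hx 1%nat); lia).
    apply derivable_upto_S with (h := fun x => Derive f x * g x + f x * Derive g x).
    + intros x Hx. apply ex_derive_mult; [apply Hf1 | apply Hg1]; exact Hx.
    + intros x Hx. apply Derive_mult; [apply Hf1 | apply Hg1]; exact Hx.
    + apply derivable_upto_plus; apply IH.
      * apply derivable_upto_Derive, Hf.
      * apply (derivable_upto_le g (S k)); [lia | exact Hg].
      * apply (derivable_upto_le f (S k)); [lia | exact Hf].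
      * apply derivable_upto_Derive, Hg.
Qed.

End DerivableUpto.

Lemma derivable_upto_comp U V g k : open U -> open V -> (forall y, U y -> V (g y)) ->
  smooth_on U g -> forall f, derivable_upto V f k -> derivable_upto U (fun x => f (g x)) k.
Proof.
  intros HU HV HUV Hg. induction k as [|k IH]; intros f Hf.
  - intros x Hx j Hj. replace j with 0%nat by lia. exact I.
  - assert (Hf1 : forall x, U x -> ex_derive f (g x))
      by (intros x Hx; apply (Hf _ (HUV x Hx) 1%nat); lia).
    assert (Hg1 : forall x, U x -> ex_derive g x)
      by (intros x Hx; apply (Hg 1%nat x Hx 1%nat); lia).
    apply derivable_upto_S with (h := fun x => Derive f (g x) * Derive g x); [exact HU | | |].
    + intros x Hx. apply ex_derive_comp; [apply Hf1 | apply Hg1]; exact Hx.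
    + intros x Hx. rewrite Derive_comp by (apply Hf1 || apply Hg1; exact Hx). ring.
    + apply derivable_upto_mult; [exact HU | apply IH, derivable_upto_Derive, Hf |].
      apply derivable_upto_Derive, Hg.
Qed.

Lemma smooth_on_Derive U f : smooth_on U f -> smooth_on U (Derive f).
Proof. intros H k. apply derivable_upto_Derive, H. Qed.

Lemma smooth_on_ext U f g : (forall t, f t = g t) -> smooth_on U f -> smooth_on U g.
Proof. intros E H k. apply (derivable_upto_ext _ f); [exact E | apply H]. Qed.

Lemma smooth_on_sub U V f : (forall y, U y -> V y) -> smooth_on V f -> smooth_on U f.
Proof. intros HUV H k x Hx. apply H, HUV, Hx. Qed.

Lemma smooth_on_const U a : smooth_on U (fun _ => a).
Proof. intros k x _ j _. apply ex_derive_n_const. Qed.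

Lemma smooth_on_id_pow U p : smooth_on U (fun x => x ^ p).
Proof. intros k x _ j _. apply ex_derive_n_pow. Qed.

Lemma smooth_on_scal U f a : smooth_on U f -> smooth_on U (fun x => a * f x).
Proof. intros Hf k x Hx j Hj. apply ex_derive_n_scal_l, (Hf k x Hx j Hj). Qed.

Lemma smooth_on_plus U f g : open U -> smooth_on U f -> smooth_on U g ->
  smooth_on U (fun x => f x + g x).
Proof. intros HU Hf Hg k. apply derivable_upto_plus; [exact HU | apply Hf | apply Hg]. Qed.

Lemma smooth_on_mult U f g : open U -> smooth_on U f -> smooth_on U g ->
  smooth_on U (fun x => f x * g x).
Proof. intros HU Hf Hg k. apply derivable_upto_mult; [exact HU | apply Hf | apply Hg]. Qed.

Lemma smooth_on_pow U f : open U -> smooth_on U f -> forall s, smooth_on U (fun x => f x ^ s).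
Proof.
  intros HU Hf s. induction s as [|s IH].
  { apply (smooth_on_ext U (fun _ => 1)); [reflexivity | apply smooth_on_const]. }
  apply (smooth_on_mult U f (fun x => f x ^ s)); assumption.
Qed.

Lemma smooth_on_comp U V g f : open U -> open V -> (forall y, U y -> V (g y)) ->
  smooth_on U g -> smooth_on V f -> smooth_on U (fun x => f (g x)).
Proof. intros HU HV HUV Hg Hf k. apply (derivable_upto_comp U V); auto. Qed.

Lemma smooth_on_inv : smooth_on (fun y => y <> 0) Rinv.
Proof.
  intros k. induction k as [|k IH].
  - intros x _ j Hj. replace j with 0%nat by lia. exact I.
  - assert (Hinv : forall y, y <> 0 -> is_derive Rinv y (- (/ y * / y))).
    { intros y Hy. replace (- (/ y * / y)) with (- 1 / y ^ 2) by (field; exact Hy).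
      apply (is_derive_inv (fun x => x) y 1); [auto_derive; reflexivity | exact Hy]. }
    apply derivable_upto_S with (h := fun x => - (/ x * / x)); [apply open_neq | | |].
    + intros y Hy. eexists. apply Hinv, Hy.
    + intros y Hy. apply is_derive_unique, Hinv, Hy.
    + intros x Hx j Hj. apply ex_derive_n_opp.
      apply (derivable_upto_mult _ (open_neq 0) k Rinv Rinv); assumption.
Qed.

Lemma smooth_inv_1_plus_sq : smooth_on (fun _ => True) (fun y => / (1 + y ^ 2)).
Proof.
  apply (smooth_on_comp _ (fun y => y <> 0));
    [apply open_true | apply open_neq | | | apply smooth_on_inv].
  - intros y _. pose proof (pow2_ge_0 y). lra.
  - apply smooth_on_plus; [apply open_true | apply smooth_on_const | apply smooth_on_id_pow].
Qed.

Lemma smooth_sin_cos : smooth_on (fun _ => True) sin /\ smooth_on (fun _ => True) cos.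
Proof.
  assert (H : forall k,
             derivable_upto (fun _ => True) sin k /\ derivable_upto (fun _ => True) cos k).
  { induction k as [|k [Hs Hc]].
    - split; intros x _ j Hj; replace j with 0%nat by lia; exact I.
    - split.
      + apply derivable_upto_S with (h := cos); [apply open_true | | | exact Hc];
          intros y _; [eexists | apply is_derive_unique]; apply is_derive_sin.
      + apply derivable_upto_S with (h := fun x => - sin x); [apply open_true | | |].
        * intros y _. eexists. apply is_derive_cos.
        * intros y _. apply is_derive_unique, is_derive_cos.
        * intros x Hx j Hj. apply ex_derive_n_opp, Hs; assumption. }
  split; intros k; apply H.
Qed.

Lemma smooth_tan : smooth_on (fun y => Rabs y < PI / 2) tan.
Proof.
  destruct smooth_sin_cos as [Hs Hc].
  apply (smooth_on_ext _ (fun x => sin x * / cos x)); [reflexivity|].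
  apply smooth_on_mult; [apply open_Rabs_lt | apply (smooth_on_sub _ _ _ (fun _ _ => I) Hs) |].
  apply (smooth_on_comp _ (fun y => y <> 0));
    [apply open_Rabs_lt | apply open_neq | | | apply smooth_on_inv].
  - intros y Hy. apply Rabs_def2 in Hy. apply Rgt_not_eq, cos_gt_0; lra.
  - apply (smooth_on_sub _ _ _ (fun _ _ => I) Hc).
Qed.

Lemma smooth_atan : smooth_on (fun _ => True) atan.
Proof.
  intros k. induction k as [|k IH].
  - intros x _ j Hj. replace j with 0%nat by lia. exact I.
  - apply derivable_upto_S with (h := fun y => / (1 + y ^ 2));
      [apply open_true | | | apply smooth_inv_1_plus_sq].
    + intros y _. eexists. apply is_derive_atan.
    + intros y _. apply is_derive_unique.
      replace (/ (1 + y ^ 2)) with (/ (1 + y²)) by (unfold Rsqr; f_equal; ring).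
      apply is_derive_atan.
Qed.

Lemma neq0_near f c : ex_derive f c -> f c <> 0 ->
  exists d, 0 < d /\ forall z, Rabs (z - c) < d -> f z <> 0.
Proof.
  intros Hd Hc.
  destruct (derivable_continuous_pt _ _ (ex_derive_Reals_0 _ _ Hd) (Rabs (f c)) (Rabs_pos_lt _ Hc))
    as [a [Ha Hx]].
  exists a. split; [exact Ha|]. intros z Hz Hfz.
  destruct (Req_dec z c) as [-> | Hzc]; [contradiction|].
  assert (H : Rabs (f z - f c) < Rabs (f c))
    by (apply Hx; split; [split; [exact I | auto] | exact Hz]).
  rewrite Hfz, Rminus_0_l, Rabs_Ropp in H. lra.
Qed.

(** * Taylor expansions *)

Definition taylor_coeff (f : R -> R) (j : nat) : R := Derive_n f j 0 / INR (Factorial.fact j).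

Lemma taylor_remainder_right f M K z : 0 < z ->
  (forall t, 0 <= t <= z -> forall k, (k <= S M)%nat -> ex_derive_n f k t) ->
  (forall t, 0 <= t <= z -> Rabs (Derive_n f (S M) t) <= K) ->
  Rabs (f z - peval (taylor_coeff f) M z) <= K / INR (Factorial.fact (S M)) * Rabs z ^ S M.
Proof.
  intros Hz Hd HK. pose proof (INR_fact_lt_0 (S M)).
  destruct (Taylor_Lagrange f M 0 z Hz Hd) as [ze [Hze ->]].
  replace (sum_f_R0 (fun m => (z - 0) ^ m / INR (Factorial.fact m) * Derive_n f m 0) M)
    with (peval (taylor_coeff f) M z)
    by (apply sum_eq; intros; unfold taylor_coeff; rewrite Rminus_0_r; field; apply INR_fact_neq_0).
  replace (_ + _ - _) with (z ^ S M * / INR (Factorial.fact (S M)) * Derive_n f (S M) ze)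
    by (rewrite Rminus_0_r; unfold Rdiv; ring).
  rewrite !Rabs_mult, <- RPow_abs, Rabs_inv, (Rabs_pos_eq (INR _)) by lra.
  assert (Rabs (Derive_n f (S M) ze) <= K) by (apply HK; lra).
  assert (0 <= Rabs z ^ S M * / INR (Factorial.fact (S M))).
  { apply Rmult_le_pos; [apply pow_le, Rabs_pos | apply Rlt_le, Rinv_0_lt_compat; lra]. }
  unfold Rdiv. nra.
Qed.

Lemma taylor_remainder_left f M K z : z < 0 ->
  (forall t, z <= t <= 0 -> locally t (fun y => forall k, (k <= S M)%nat -> ex_derive_n f k y)) ->
  (forall t, z <= t <= 0 -> Rabs (Derive_n f (S M) t) <= K) ->
  Rabs (f z - peval (taylor_coeff f) M z) <= K / INR (Factorial.fact (S M)) * Rabs z ^ S M.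
Proof.
  intros Hz Hloc HK. set (g := fun y => f (- y)).
  assert (Hg : forall j t, (j <= S M)%nat -> 0 <= t <= - z ->
            Derive_n g j t = (-1) ^ j * Derive_n f j (- t)).
  { intros j t Hj Ht. apply Derive_n_comp_opp.
    eapply filter_imp; [|apply Hloc; split; lra]. intros y Hy k Hk. apply Hy. lia. }
  assert (Hpeval : peval (taylor_coeff g) M (- z) = peval (taylor_coeff f) M z).
  { apply sum_eq. intros j Hj. unfold taylor_coeff.
    rewrite Hg, Ropp_0 by (lia || (split; lra)).
    assert (Hsq : (-1) ^ j * (-1) ^ j = 1).
    { rewrite <- Rpow_mult_distr. replace (-1 * -1) with 1 by ring. apply pow1. }
    replace (- z) with (-1 * z) by ring. rewrite Rpow_mult_distr.
    transitivity ((-1) ^ j * (-1) ^ j * (Derive_n f j 0 / INR (Factorial.fact j) * z ^ j));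
      [unfold Rdiv; ring | rewrite Hsq; ring]. }
  replace (f z) with (g (- z)) by (unfold g; rewrite Ropp_involutive; reflexivity).
  rewrite <- Hpeval, <- (Rabs_Ropp z).
  apply taylor_remainder_right; [lra | |].
  - intros t Ht k Hk. apply ex_derive_n_comp_opp.
    eapply filter_imp; [|apply Hloc; split; lra]. intros y Hy k' Hk'. apply Hy. lia.
  - intros t Ht. rewrite Hg, Rabs_mult, pow_1_abs, Rmult_1_l by (lia || (split; lra)).
    apply HK. split; lra.
Qed.

Lemma taylor_expansion f d M : 0 < d -> smooth_on (fun y => Rabs y < d) f ->
  expansion f M (taylor_coeff f).
Proof.
  intros Hd Hf. set (d' := d / 2).
  assert (Hin : forall t, -d' <= t <= d' -> Rabs t < d)
    by (intros t Ht; apply Rabs_def1; unfold d' in *; lra).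
  assert (Hcont : forall c, -d' <= c <= d' -> continuity_pt (fun t => Rabs (Derive_n f (S M) t)) c).
  { intros c Hc. apply (continuity_pt_comp (Derive_n f (S M)) Rabs); [|apply Rcontinuity_abs].
    apply derivable_continuous_pt, ex_derive_Reals_0.
    change (ex_derive_n f (S (S M)) c). apply (Hf (S (S M)) c (Hin c Hc)). lia. }
  destruct (continuity_ab_maj _ (- d') d' ltac:(unfold d'; lra) Hcont) as [Mx [HMx _]].
  exists (Rabs (Derive_n f (S M) Mx) / INR (Factorial.fact (S M))), d'. split; [unfold d'; lra|].
  intros z Hz. apply Rabs_def2 in Hz. destruct (Rtotal_order z 0) as [Hneg | [-> | Hpos]].
  - apply taylor_remainder_left; [exact Hneg | | intros t Ht; apply HMx; lra].
    intros t Ht. apply (locally_open (fun y => Rabs y < d)); [apply open_Rabs_lt | | apply Hin; lra].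
    intros y Hy k _. apply (Hf k y Hy k (le_n k)).
  - rewrite peval_0. unfold taylor_coeff. simpl Derive_n.
    replace (f 0 / INR (Factorial.fact 0)) with (f 0) by (simpl; field).
    rewrite Rminus_diag, Rabs_R0, pow_i, Rmult_0_r by lia. lra.
  - apply taylor_remainder_right; [exact Hpos | | intros t Ht; apply HMx; lra].
    intros t Ht k _. apply (Hf k t (Hin t ltac:(lra)) k (le_n k)).
Qed.

Lemma smooth_lipschitz_at0 f d : 0 < d -> smooth_on (fun y => Rabs y < d) f ->
  exists L d', 0 <= L /\ 0 < d' /\ forall z, Rabs z < d' -> Rabs (f z - f 0) <= L * Rabs z.
Proof.
  intros Hd Hf.
  destruct (expansion_nonneg_constant _ _ _ (taylor_expansion f d 0 Hd Hf))
    as [L [d' [HL [Hd' H]]]].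
  exists L, d'. repeat split; [exact HL | exact Hd' |]. intros z Hz. specialize (H z Hz).
  unfold peval, taylor_coeff in H. simpl in H.
  replace (f 0 / 1 * 1) with (f 0) in H by field. rewrite Rmult_1_r in H. exact H.
Qed.

Lemma smooth_linear_bound f d : 0 < d -> smooth_on (fun y => Rabs y < d) f -> f 0 = 0 ->
  exists L d', 0 < d' /\ forall z, Rabs z < d' -> Rabs (f z) <= L * Rabs z.
Proof.
  intros Hd Hf H0. destruct (smooth_lipschitz_at0 f d Hd Hf) as [L [d' [_ [Hd' H]]]].
  exists L, d'. split; [exact Hd'|]. intros z Hz. rewrite <- (Rminus_0_r (f z)), <- H0. apply H, Hz.
Qed.

Lemma smooth_bounded_near0 f d : 0 < d -> smooth_on (fun y => Rabs y < d) f ->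
  exists B d', 0 < d' /\ forall z, Rabs z < d' -> Rabs (f z) <= B.
Proof.
  intros Hd Hf. destruct (smooth_lipschitz_at0 f d Hd Hf) as [L [d' [HL [Hd' H]]]].
  exists (Rabs (f 0) + L), (Rmin d' 1). split; [apply Rmin_pos; lra|]. intros z Hz.
  pose proof (Rmin_l d' 1). pose proof (Rmin_r d' 1).
  replace (f z) with ((f z - f 0) + f 0) by ring.
  eapply Rle_trans; [apply Rabs_triang|]. specialize (H z ltac:(lra)).
  assert (L * Rabs z <= L) by (rewrite <- (Rmult_1_r L) at 2; apply Rmult_le_compat_l; lra).
  lra.
Qed.

Lemma expansion_Derive f d M : 0 < d -> smooth_on (fun y => Rabs y < d) f ->
  expansion (Derive f) M (fun j => INR (S j) * taylor_coeff f (S j)).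
Proof.
  intros Hd Hf. eapply expansion_ext_near;
    [apply (taylor_expansion (Derive f) d M Hd (smooth_on_Derive _ _ Hf))
    | exists 1; split; [lra | reflexivity] |].
  intros j _. unfold taylor_coeff. rewrite Derive_n_Derive.
  replace (Factorial.fact (S j)) with (S j * Factorial.fact j)%nat by reflexivity.
  rewrite mult_INR. field. split; [apply INR_fact_neq_0 | apply not_0_INR; lia].
Qed.

Lemma expansion_z_Derive f d M : 0 < d -> smooth_on (fun y => Rabs y < d) f ->
  expansion (fun z => z * Derive f z) (S M) (fun j => INR j * taylor_coeff f j).
Proof.
  intros Hd Hf. eapply expansion_ext_near;
    [apply expansion_shift, (expansion_Derive f d M Hd Hf) | exists 1; split; [lra | reflexivity] |].
  intros [|j] _; [simpl; ring | reflexivity].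
Qed.

(* Expand [x / (1 - x u)] geometrically in [u = f z]: by [f' f^s = (f^(s+1))' / (s+1)] each
   term is an instance of [expansion_z_Derive], and the tail is [O(z^(M+2))] as [f z = O(z)]. *)
Lemma expansion_z_Derive_geometric f d x M : 0 < d -> smooth_on (fun y => Rabs y < d) f ->
  f 0 = 0 ->
  expansion (fun z => z * Derive f z * (x / (1 - x * f z))) (S M)
    (fun j => sum_f_R0 (fun s =>
       x ^ S s / INR (S s) * (INR j * taylor_coeff (fun z => f z ^ S s) j)) M).
Proof.
  intros Hd Hf H0.
  set (P := fun z => peval (fun j => x * x ^ j) M (f z)).
  assert (Hsum : expansion (fun z => z * Derive f z * P z) (S M)
    (fun j => sum_f_R0 (fun s =>
       x ^ S s / INR (S s) * (INR j * taylor_coeff (fun z => f z ^ S s) j)) M)).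
  { eapply expansion_ext_near; [| |reflexivity].
    - apply (expansion_sum (S M) M
               (fun s z => x ^ S s / INR (S s) * (z * Derive (fun z => f z ^ S s) z))).
      intros s _. apply expansion_scal, (expansion_z_Derive _ d); [exact Hd|].
      apply smooth_on_pow; [apply open_Rabs_lt | exact Hf].
    - exists d. split; [exact Hd|]. intros z Hz.
      unfold P, peval. rewrite scal_sum. apply sum_eq. intros s _.
      rewrite Derive_pow by (apply (Hf 1%nat z Hz 1%nat); lia). simpl Init.Nat.pred.
      assert (INR (S s) <> 0) by (apply not_0_INR; lia).
      simpl pow. unfold Rdiv. field. assumption. }
  apply (expansion_approx _ _ _ _ Hsum).
  destruct (smooth_bounded_near0 (Derive f) d Hd (smooth_on_Derive _ _ Hf)) as [B [d1 [Hd1 HB]]].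
  destruct (smooth_linear_bound f d Hd Hf H0) as [L [d2 [Hd2 HL]]].
  destruct (expansion_comp_bound (fun u => x * / (1 - u * x)) f M (fun j => x * x ^ j)
              (expansion_scal _ _ _ x (expansion_geometric x M)) ltac:(exists L, d2; auto))
    as [K [d3 [Hd3 HK]]].
  assert (HB0 : 0 <= B)
    by (eapply Rle_trans; [apply Rabs_pos | apply HB; rewrite Rabs_R0; exact Hd1]).
  exists (B * K), (Rmin d1 d3). split; [apply Rmin_pos; assumption|].
  intros z Hz. pose proof (Rmin_l d1 d3). pose proof (Rmin_r d1 d3).
  replace (z * Derive f z * (x / (1 - x * f z)) - z * Derive f z * P z)
    with (z * Derive f z * (x * / (1 - f z * x) - P z))
    by (unfold Rdiv; rewrite (Rmult_comm x (f z)); ring).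
  rewrite !Rabs_mult.
  specialize (HB z ltac:(lra)). specialize (HK z ltac:(lra)).
  replace (B * K * Rabs z ^ S (S M)) with (Rabs z * B * (K * Rabs z ^ S M)) by (simpl; ring).
  apply Rmult_le_compat; [apply Rmult_le_pos; apply Rabs_pos | apply Rabs_pos | | exact HK].
  apply Rmult_le_compat_l; [apply Rabs_pos | exact HB].
Qed.

Lemma Derive_n_pow_at0 f d s j : 0 < d -> smooth_on (fun y => Rabs y < d) f -> f 0 = 0 ->
  (j < s)%nat -> Derive_n (fun z => f z ^ s) j 0 = 0.
Proof.
  intros Hd Hf H0 Hj. destruct s as [|s]; [lia|].
  destruct (smooth_linear_bound f d Hd Hf H0) as [L [d' [Hd' HL]]].
  assert (Hs : expansion (fun z => f z ^ S s) s (fun _ => 0)).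
  { apply expansion_bigO. exists (L ^ S s), d'. split; [exact Hd'|]. intros z Hz.
    rewrite <- RPow_abs, <- Rpow_mult_distr. apply pow_incr. split; [apply Rabs_pos | apply HL, Hz]. }
  assert (E := expansion_unique _ _ _ _
                 (taylor_expansion _ d s Hd (smooth_on_pow _ _ (open_Rabs_lt d) Hf (S s)))
                 Hs j ltac:(lia)).
  unfold taylor_coeff in E. pose proof (INR_fact_lt_0 j).
  apply (Rmult_eq_reg_r (/ INR (Factorial.fact j))); [rewrite Rmult_0_l; exact E|].
  apply Rinv_neq_0_compat. lra.
Qed.

Lemma Derive_n_comp_at0 (F G : R -> R) dF dG M : 0 < dF -> 0 < dG ->
  smooth_on (fun y => Rabs y < dF) F -> smooth_on (fun y => Rabs y < dG) G -> G 0 = 0 ->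
  (forall z, Rabs z < dG -> Rabs (G z) < dF) ->
  Derive_n (fun z => F (G z)) M 0 =
  sum_f_R0 (fun k => Derive_n F k 0 * Derive_n (fun z => G z ^ k / INR (Factorial.fact k)) M 0) M.
Proof.
  intros HdF HdG HF HG HG0 Hmap.
  assert (HFG : smooth_on (fun y => Rabs y < dG) (fun z => F (G z))).
  { apply (smooth_on_comp _ (fun y => Rabs y < dF)); try apply open_Rabs_lt; assumption. }
  assert (HGk : forall k,
             smooth_on (fun y => Rabs y < dG) (fun z => G z ^ k / INR (Factorial.fact k))).
  { intros k. apply (smooth_on_ext _ (fun z => / INR (Factorial.fact k) * G z ^ k));
      [intros; unfold Rdiv; ring|].
    apply smooth_on_scal, smooth_on_pow; [apply open_Rabs_lt | exact HG]. }
  set (a := taylor_coeff F).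
  assert (Hsum : expansion (fun z => peval a M (G z)) M
     (fun j => sum_f_R0 (fun k => Derive_n F k 0 *
        taylor_coeff (fun z => G z ^ k / INR (Factorial.fact k)) j) M)).
  { eapply expansion_ext_near.
    - apply (expansion_sum M M (fun k z => Derive_n F k 0 * (G z ^ k / INR (Factorial.fact k)))).
      intros k _. apply expansion_scal, (taylor_expansion _ dG M HdG (HGk k)).
    - exists 1. split; [lra|]. intros z _. apply sum_eq. intros k _. unfold a, taylor_coeff, Rdiv. ring.
    - reflexivity. }
  destruct (smooth_linear_bound G dG HdG HG HG0) as [L [d' [Hd' HL]]].
  assert (Hcomp := expansion_approx _ _ _ _ Hsum
          (expansion_comp_bound F G M a (taylor_expansion F dF M HdF HF) ltac:(exists L, d'; auto))).
  assert (E := expansion_unique _ _ _ _ (taylor_expansion _ dG M HdG HFG) Hcomp M (le_n M)).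
  unfold taylor_coeff in E. pose proof (INR_fact_lt_0 M).
  apply (Rmult_eq_reg_r (/ INR (Factorial.fact M))); [|apply Rinv_neq_0_compat; lra].
  change (Derive_n (fun z => F (G z)) M 0 / INR (Factorial.fact M) =
    sum_f_R0 (fun k => Derive_n F k 0 * Derive_n (fun z => G z ^ k / INR (Factorial.fact k)) M 0) M
      / INR (Factorial.fact M)).
  rewrite E. unfold Rdiv. rewrite Rmult_comm, scal_sum. apply sum_eq. intros; ring.
Qed.

(** * A sum of cotangents over the roots of unity *)

Definition cis (t : R) : C := (cos t, sin t).

Fixpoint Csum (f : nat -> C) (n : nat) : C :=
  match n with 0%nat => 0%C | S n => (Csum f n + f n)%C end.

Lemma cis_add a b : cis (a + b) = (cis a * cis b)%C.
Proof. unfold cis. apply injective_projections; simpl; [rewrite cos_plus | rewrite sin_plus]; ring. Qed.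

Lemma cis_0 : cis 0 = 1%C.
Proof. unfold cis. rewrite cos_0, sin_0. reflexivity. Qed.

Lemma cis_pow t k : Cpow (cis t) k = cis (INR k * t).
Proof.
  induction k as [|k IH]; [simpl; rewrite Rmult_0_l, cis_0; reflexivity|].
  rewrite Cpow_S, IH, <- cis_add, S_INR. f_equal. ring.
Qed.

Lemma cis_period x k : cis (x + 2 * INR k * PI) = cis x.
Proof. unfold cis. rewrite cos_period, sin_period. reflexivity. Qed.

Lemma cis_double_neq1 t : sin t <> 0 -> (cis (2 * t) - 1)%C <> 0%C.
Proof.
  intros Hs H. apply (f_equal fst) in H. simpl in H.
  rewrite cos_2a_sin in H. apply Hs. nra.
Qed.

Lemma cot_cis t : sin t <> 0 -> RtoC (cot t) = (Ci + 2 * Ci / (cis (2 * t) - 1))%C.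
Proof.
  intros Hs. assert (Hn := cis_double_neq1 t Hs).
  assert (H : (RtoC (cot t) * (cis (2 * t) - 1) = Ci * (cis (2 * t) - 1) + 2 * Ci)%C).
  { unfold cis, cot. apply injective_projections; simpl.
    - rewrite cos_2a_sin, sin_2a. field. exact Hs.
    - rewrite cos_2a_cos, sin_2a. field. exact Hs. }
  transitivity (RtoC (cot t) * (cis (2 * t) - 1) / (cis (2 * t) - 1))%C; [field; exact Hn|].
  rewrite H. field. exact Hn.
Qed.

Lemma Csum_ext f g n : (forall k, (k < n)%nat -> f k = g k) -> Csum f n = Csum g n.
Proof. induction n as [|n IH]; intros H; simpl; [reflexivity|]. rewrite IH, H; auto. Qed.

Lemma Csum_plus f g n : Csum (fun k => f k + g k)%C n = (Csum f n + Csum g n)%C.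
Proof. induction n as [|n IH]; simpl; [ring | rewrite IH; ring]. Qed.

Lemma Csum_scal c f n : (c * Csum f n)%C = Csum (fun k => c * f k)%C n.
Proof. induction n as [|n IH]; simpl; [ring | rewrite <- IH; ring]. Qed.

Lemma Csum_const c n : Csum (fun _ => c) n = (RtoC (INR n) * c)%C.
Proof.
  induction n as [|n IH]; simpl Csum; [simpl; ring|].
  rewrite IH, S_INR, RtoC_plus. ring.
Qed.

Lemma Csum_swap (F : nat -> nat -> C) n m :
  Csum (fun k => Csum (fun j => F k j) m) n = Csum (fun j => Csum (fun k => F k j) n) m.
Proof.
  induction n as [|n IH]; simpl.
  - induction m as [|m IHm]; simpl; [reflexivity | rewrite <- IHm; ring].
  - rewrite IH, <- Csum_plus. reflexivity.
Qed.

Lemma Csum_first f n : Csum f (S n) = (f 0%nat + Csum (fun k => f (S k)) n)%C.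
Proof. induction n as [|n IH]; simpl; [ring|]. simpl in IH. rewrite IH. ring. Qed.

Lemma RtoC_sum_f_R0 f N : RtoC (sum_f_R0 f N) = Csum (fun k => RtoC (f k)) (S N).
Proof. induction N as [|N IH]; simpl; [ring | rewrite RtoC_plus, IH; reflexivity]. Qed.

Lemma Csum_geometric u n : ((u - 1) * Csum (Cpow u) n = Cpow u n - 1)%C.
Proof. induction n as [|n IH]; simpl; [ring|]. rewrite Cmult_plus_distr_l, IH. ring. Qed.

Lemma Csum_unity_root u n : Cpow u n = 1%C -> (u - 1)%C <> 0%C -> Csum (Cpow u) n = 0%C.
Proof.
  intros Hun Hu.
  transitivity ((u - 1) * Csum (Cpow u) n / (u - 1))%C; [field; exact Hu|].
  rewrite Csum_geometric, Hun. field. exact Hu.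
Qed.

(* The [w_k = cis (2 (b + k PI) / n)] are the [n]-th roots of [Y = cis (2 b)]: expand
   [(Y - 1) / (w_k - 1) = sum_(j<n) w_k^j] and sum over [k]; only [j = 0] survives. *)
Lemma Csum_inv_roots n b : (1 <= n)%nat -> sin b <> 0 ->
  Csum (fun k => (cis (2 * b) - 1) / (cis (2 * ((b + INR k * PI) / INR n)) - 1))%C n = RtoC (INR n).
Proof.
  intros Hn Hb. set (N := INR n). assert (HN : 0 < N) by (apply lt_0_INR; lia).
  set (w := fun k => cis (2 * ((b + INR k * PI) / N))).
  assert (Hw1 : forall k, (w k - 1)%C <> 0%C).
  { intros k. apply cis_double_neq1. intros Hs. apply sin_eq_0_0 in Hs as [z Hz]. apply Hb.
    apply sin_eq_0_1. exists (z * Z.of_nat n - Z.of_nat k)%Z.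
    rewrite minus_IZR, mult_IZR, <- !INR_IZR_INZ. fold N.
    replace b with ((b + INR k * PI) / N * N - INR k * PI) at 1 by (field; lra).
    rewrite Hz. ring. }
  assert (Hwn : forall k, Cpow (w k) n = cis (2 * b)).
  { intros k. unfold w. rewrite cis_pow.
    replace (INR n * (2 * ((b + INR k * PI) / N))) with (2 * b + 2 * INR k * PI)
      by (fold N; field; lra).
    apply cis_period. }
  rewrite (Csum_ext _ (fun k => Csum (Cpow (w k)) n)).
  2:{ intros k _. rewrite <- (Hwn k), <- Csum_geometric. fold (w k). field. apply Hw1. }
  rewrite Csum_swap. destruct n as [|n']; [lia|]. rewrite Csum_first.
  rewrite (Csum_ext (fun k => Cpow (w k) 0) (fun _ => 1%C)) by reflexivity.
  rewrite Csum_const, (Csum_ext _ (fun _ => 0%C)); [rewrite Csum_const; fold N; ring|].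
  intros j Hj. set (u := cis (2 * (PI * INR (S j) / N))).
  rewrite (Csum_ext _ (fun k => cis (INR (S j) * 2 * b / N) * Cpow u k)%C).
  2:{ intros k _. unfold u, w. rewrite !cis_pow, <- cis_add. f_equal. field. lra. }
  rewrite <- Csum_scal, Csum_unity_root; [ring | |].
  - unfold u. rewrite cis_pow.
    replace (INR (S n') * (2 * (PI * INR (S j) / N))) with (0 + 2 * INR (S j) * PI)
      by (fold N; field; lra).
    rewrite cis_period, cis_0. reflexivity.
  - apply cis_double_neq1, Rgt_not_eq, sin_gt_0.
    + apply Rdiv_lt_0_compat; [|exact HN].
      apply Rmult_lt_0_compat; [apply PI_RGT_0 | apply lt_0_INR; lia].
    + apply (Rmult_lt_reg_r N); [exact HN|]. unfold Rdiv. rewrite Rmult_assoc, Rinv_l, Rmult_1_r by lra.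
      apply Rmult_lt_compat_l; [apply PI_RGT_0 | apply lt_INR; lia].
Qed.

Lemma sin_shift_neq0 n b k : (1 <= n)%nat -> sin b <> 0 -> sin ((b + INR k * PI) / INR n) <> 0.
Proof.
  intros Hn Hb H. assert (HN : 0 < INR n) by (apply lt_0_INR; lia).
  apply sin_eq_0_0 in H as [z Hz]. apply Hb, sin_eq_0_1.
  exists (z * Z.of_nat n - Z.of_nat k)%Z. rewrite minus_IZR, mult_IZR, <- !INR_IZR_INZ.
  replace b with ((b + INR k * PI) / INR n * INR n - INR k * PI) at 1 by (field; lra).
  rewrite Hz. ring.
Qed.

Lemma sum_cot_shifts n b : (1 <= n)%nat -> sin b <> 0 ->
  sum_f_R0 (fun k => cot ((b + INR k * PI) / INR n)) (n - 1) = INR n * cot b.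
Proof.
  intros Hn Hb. apply RtoC_inj. rewrite RtoC_sum_f_R0. replace (S (n - 1)) with n by lia.
  set (Y := cis (2 * b)). assert (HY : (Y - 1)%C <> 0%C) by (apply cis_double_neq1; exact Hb).
  rewrite (Csum_ext _ (fun k => Ci + (2 * Ci / (Y - 1)) *
                         ((Y - 1) / (cis (2 * ((b + INR k * PI) / INR n)) - 1)))%C).
  2:{ intros k _. rewrite cot_cis by (apply sin_shift_neq0; assumption). field.
      split; [apply cis_double_neq1, sin_shift_neq0 |]; assumption. }
  rewrite Csum_plus, Csum_const, <- Csum_scal. unfold Y. rewrite Csum_inv_roots by assumption.
  rewrite RtoC_mult, cot_cis by exact Hb. fold Y. field. exact HY.
Qed.

(** * The generating function of the power sums *)

Lemma cot_sub a p : sin a <> 0 -> cos p <> 0 -> sin (a - p) <> 0 ->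
  1 - cot a * tan p <> 0 /\ cot (a - p) = (cot a + tan p) / (1 - cot a * tan p).
Proof.
  intros Ha Hp Hd.
  assert (Es : sin (a - p) = sin a * cos p * (1 - cot a * tan p))
    by (rewrite sin_minus; unfold cot, tan; field; auto).
  assert (Ec : cos (a - p) = sin a * cos p * (cot a + tan p))
    by (rewrite cos_minus; unfold cot, tan; field; auto).
  assert (H1 : 1 - cot a * tan p <> 0) by (intros H; apply Hd; rewrite Es, H; ring).
  split; [exact H1|]. unfold cot at 1. rewrite Es, Ec. field. auto.
Qed.

Lemma cos_atan_pos z : 0 < cos (atan z).
Proof. apply cos_gt_0; pose proof (atan_bound z); lra. Qed.

Lemma sum_inv_one_sub_mul_cot n alpha z : (1 <= n)%nat -> sin alpha <> 0 ->
  sin (alpha - INR n * atan z) <> 0 -> cos (INR n * atan z) <> 0 ->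
  (1 + z ^ 2) * sum_f_R0 (fun k => / (1 - z * cot ((alpha + INR k * PI) / INR n))) (n - 1) =
  INR n + INR n * z * ((cot alpha + tan (INR n * atan z)) / (1 - cot alpha * tan (INR n * atan z))).
Proof.
  intros Hn Ha Hb Hc. assert (HN : 0 < INR n) by (apply lt_0_INR; lia).
  set (b := alpha - INR n * atan z).
  assert (Hshift : forall k, (b + INR k * PI) / INR n = (alpha + INR k * PI) / INR n - atan z)
    by (intros k; unfold b; field; lra).
  destruct (cot_sub alpha (INR n * atan z) Ha Hc Hb) as [_ Eb]. fold b in Eb.
  pose proof (sum_cot_shifts n b Hn Hb) as Hsum. rewrite Eb in Hsum.
  rewrite scal_sum, (sum_eq _ (fun k => 1 + cot ((b + INR k * PI) / INR n) * z)).
  - rewrite plus_sum, sum_cte, <- scal_sum, Hsum. replace (S (n - 1)) with n by lia. ring.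
  - intros k _. rewrite Hshift.
    assert (Hk : sin ((alpha + INR k * PI) / INR n) <> 0) by (apply sin_shift_neq0; assumption).
    assert (Hk' : sin ((alpha + INR k * PI) / INR n - atan z) <> 0)
      by (rewrite <- Hshift; apply sin_shift_neq0; assumption).
    destruct (cot_sub _ (atan z) Hk (Rgt_not_eq _ _ (cos_atan_pos z)) Hk') as [H1 H2].
    rewrite atan_right_inv in H1, H2. rewrite H2. field. exact H1.
Qed.

Lemma mul_atan_small a : exists d, 0 < d /\ forall z, Rabs z < d -> Rabs (a * atan z) < PI / 2.
Proof.
  destruct (smooth_linear_bound atan 1 Rlt_0_1 (smooth_on_sub _ _ _ (fun _ _ => I) smooth_atan) atan_0)
    as [L [d' [Hd' H]]].
  pose proof (Rabs_pos a). pose proof (Rabs_pos L). pose proof PI2_1.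
  exists (Rmin d' (/ (Rabs a * Rabs L + 1))). split.
  { apply Rmin_pos; [exact Hd' | apply Rinv_0_lt_compat; nra]. }
  intros z Hz. pose proof (Rmin_l d' (/ (Rabs a * Rabs L + 1))).
  pose proof (Rmin_r d' (/ (Rabs a * Rabs L + 1))). pose proof (Rabs_pos z).
  assert (Hat : Rabs (atan z) <= Rabs L * Rabs z).
  { eapply Rle_trans; [apply H; lra | apply Rmult_le_compat_r; [lra | apply RRle_abs]]. }
  assert (Rabs z * (Rabs a * Rabs L + 1) < 1).
  { apply (Rmult_lt_reg_r (/ (Rabs a * Rabs L + 1))); [apply Rinv_0_lt_compat; nra|].
    rewrite Rmult_assoc, Rinv_r by nra. lra. }
  rewrite Rabs_mult.
  assert (Rabs a * Rabs (atan z) <= Rabs a * (Rabs L * Rabs z)) by (apply Rmult_le_compat_l; lra).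
  nra.
Qed.

Lemma smooth_tan_mul_atan a d : (forall z, Rabs z < d -> Rabs (a * atan z) < PI / 2) ->
  smooth_on (fun z => Rabs z < d) (fun z => tan (a * atan z)).
Proof.
  intros H. apply (smooth_on_comp _ (fun y => Rabs y < PI / 2)); try apply open_Rabs_lt;
    [exact H | | exact smooth_tan].
  apply (smooth_on_sub _ (fun _ => True)); [intros; exact I|]. apply smooth_on_scal, smooth_atan.
Qed.

Lemma is_derive_tan_mul_atan a z : cos (a * atan z) <> 0 ->
  is_derive (fun z => tan (a * atan z)) z (a * (1 + tan (a * atan z) ^ 2) / (1 + z ^ 2)).
Proof.
  intros Hc.
  assert (Hd : is_derive (fun z => a * atan z) z (a / (1 + z ^ 2))).
  { auto_derive; [exact I|]. unfold Rsqr. field. pose proof (pow2_ge_0 z). lra. }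
  eapply is_derive_ext; [intros; reflexivity|].
  replace (a * (1 + tan (a * atan z) ^ 2) / (1 + z ^ 2))
    with (a / (1 + z ^ 2) * (tan (a * atan z) ^ 2 + 1)) by (unfold Rdiv; ring).
  apply (is_derive_comp tan (fun z => a * atan z)); [apply is_derive_tan, Hc | exact Hd].
Qed.

Lemma generating_function_cot n alpha z : (1 <= n)%nat -> sin alpha <> 0 ->
  sin (alpha - INR n * atan z) <> 0 -> cos (INR n * atan z) <> 0 ->
  sum_f_R0 (fun k => / (1 - z * cot ((alpha + INR k * PI) / INR n))) (n - 1) =
  INR n * (1 + z * tan (INR n * atan z)) * / (1 + z ^ 2) +
  z * Derive (fun z => tan (INR n * atan z)) z *
    (cot alpha / (1 - cot alpha * tan (INR n * atan z))).
Proof.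
  intros Hn Ha Hs Hc.
  destruct (cot_sub alpha (INR n * atan z) Ha Hc Hs) as [Hxt _].
  assert (Hz2 : 1 + z ^ 2 <> 0) by (pose proof (pow2_ge_0 z); lra).
  apply (Rmult_eq_reg_l (1 + z ^ 2)); [|exact Hz2].
  rewrite sum_inv_one_sub_mul_cot by assumption.
  rewrite (is_derive_unique (fun z : R => tan (INR n * atan z)) z _
             (is_derive_tan_mul_atan (INR n) z Hc)).
  field. split; assumption.
Qed.

Lemma sum_cot_pow_shifts n M : (1 <= n)%nat -> exists c0, forall alpha, sin alpha <> 0 ->
  sum_f_R0 (fun k => cot ((alpha + INR k * PI) / INR n) ^ S M) (n - 1) =
  c0 + sum_f_R0 (fun s => INR (S M) / INR (S s) *
         taylor_coeff (fun z => tan (INR n * atan z) ^ S s) (S M) * cot alpha ^ S s) M.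
Proof.
  intros Hn. set (N := INR n). set (t := fun z => tan (N * atan z)).
  destruct (mul_atan_small N) as [d [Hd Hdom]].
  assert (Hball := open_Rabs_lt d).
  assert (Ht : smooth_on (fun z => Rabs z < d) t) by (apply smooth_tan_mul_atan, Hdom).
  assert (Ht0 : t 0 = 0) by (unfold t; rewrite atan_0, Rmult_0_r; apply tan_0).
  set (H := fun z => N * (1 + z * t z) * / (1 + z ^ 2)).
  assert (HH : smooth_on (fun z => Rabs z < d) H).
  { apply smooth_on_mult;
      [exact Hball | | exact (smooth_on_sub _ _ _ (fun _ _ => I) smooth_inv_1_plus_sq)].
    apply smooth_on_scal, smooth_on_plus; [exact Hball | apply smooth_on_const |].
    apply smooth_on_mult; [exact Hball | apply (smooth_on_ext _ (fun z => z ^ 1)) | exact Ht];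
      [intros; ring | apply smooth_on_id_pow]. }
  exists (taylor_coeff H (S M)). intros alpha Ha. set (x := cot alpha).
  set (c := fun k => cot ((alpha + INR k * PI) / INR n)).
  destruct (neq0_near (fun z => sin (alpha - N * atan z)) 0) as [d' [Hd' Hsin]];
    [auto_derive; exact I | rewrite atan_0, Rmult_0_r, Rminus_0_r; exact Ha |].
  assert (ELHS : expansion (fun z => sum_f_R0 (fun k => / (1 - z * c k)) (n - 1)) (S M)
                   (fun j => sum_f_R0 (fun k => c k ^ j) (n - 1)))
    by (apply expansion_sum; intros; apply expansion_geometric).
  assert (ERHS : expansion (fun z => sum_f_R0 (fun k => / (1 - z * c k)) (n - 1)) (S M)
     (fun j => taylor_coeff H j + sum_f_R0 (fun s => x ^ S s / INR (S s) *
                 (INR j * taylor_coeff (fun z => t z ^ S s) j)) M)).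
  { eapply expansion_ext_near; [| | reflexivity].
    - exact (expansion_plus _ _ _ _ _ (taylor_expansion H d (S M) Hd HH)
               (expansion_z_Derive_geometric t d x M Hd Ht Ht0)).
    - exists (Rmin d d'). split; [apply Rmin_pos; assumption|].
      intros z Hz. pose proof (Rmin_l d d'). pose proof (Rmin_r d d').
      pose proof (Hdom z ltac:(lra)) as Hz'. apply Rabs_def2 in Hz'.
      symmetry. apply generating_function_cot;
        [exact Hn | exact Ha | apply Hsin; rewrite Rminus_0_r; lra |].
      apply Rgt_not_eq, cos_gt_0; fold N; lra. }
  change (sum_f_R0 (fun k => c k ^ S M) (n - 1) = taylor_coeff H (S M) + sum_f_R0 (fun s =>
    INR (S M) / INR (S s) * taylor_coeff (fun z => tan (INR n * atan z) ^ S s) (S M) * x ^ S s) M).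
  rewrite (expansion_unique _ _ _ _ ELHS ERHS (S M) (le_n _)).
  f_equal. apply sum_eq. intros s _. unfold x, t, N, Rdiv. ring.
Qed.

(** * Tangent and arctangent numbers *)

Lemma fold_right_seq_sum (f : nat -> R) a L :
  fold_right Rplus 0 (map f (seq a (S L))) = sum_f_R0 (fun i => f (a + i)%nat) L.
Proof.
  revert a. induction L as [|L IH]; intros a; [simpl; rewrite Nat.add_0_r; ring|].
  change (f a + fold_right Rplus 0 (map f (seq (S a) (S L)))
          = sum_f_R0 (fun i => f (a + i)%nat) (S L)).
  rewrite IH, (decomp_sum _ (S L)) by lia. simpl Init.Nat.pred. rewrite Nat.add_0_r.
  f_equal. apply sum_eq. intros i _. f_equal. lia.
Qed.

Lemma Rsum_range_0 f m : Rsum_range f 0 m = sum_f_R0 f m.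
Proof. unfold Rsum_range. rewrite Nat.sub_0_r, fold_right_seq_sum. reflexivity. Qed.

Lemma Scot_sum n m alpha : (1 <= n)%nat ->
  Scot m n alpha = sum_f_R0 (fun k => cot ((alpha + INR k * PI) / INR n) ^ m) (n - 1).
Proof.
  intros Hn. unfold Scot. replace n with (S (n - 1)) at 1 by lia.
  rewrite fold_right_seq_sum. reflexivity.
Qed.

Lemma not_multiple_PI alpha : sin alpha <> 0 -> forall z : Z, alpha <> IZR z * PI.
Proof. intros Hs z Hz. apply Hs, sin_eq_0_1. exists z. exact Hz. Qed.

Lemma cot_PI2_sub_atan x : sin (PI / 2 - atan x) <> 0 /\ cot (PI / 2 - atan x) = x.
Proof.
  pose proof (cos_atan_pos x). rewrite <- (atan_right_inv x) at 3.
  unfold cot, tan. rewrite sin_shift, cos_shift. split; [lra | reflexivity].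
Qed.

Lemma Derive_n_tan_pow_mul_atan n r m : (1 <= r <= m)%nat ->
  Derive_n (fun z => tan (INR n * atan z) ^ r) m 0 =
  Rsum_range (fun k => INR n ^ k * arctan_num m k * tan_num k r) r m.
Proof.
  intros Hr. destruct (mul_atan_small (INR n)) as [d [Hd Hdom]].
  assert (Htan : smooth_on (fun y => Rabs y < PI / 2) (fun y => tan y ^ r))
    by (apply smooth_on_pow; [apply open_Rabs_lt | exact smooth_tan]).
  assert (Hatan : smooth_on (fun y => Rabs y < d) (fun z => INR n * atan z)).
  { apply (smooth_on_sub _ (fun _ => True)); [intros; exact I|]. apply smooth_on_scal, smooth_atan. }
  pose proof (Derive_n_comp_at0 (fun y => tan y ^ r) (fun z => INR n * atan z) (PI / 2) d m
                PI2_RGT_0 Hd Htan Hatan ltac:(cbv beta; rewrite atan_0; ring) Hdom) as Hcomp.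
  cbv beta in Hcomp. rewrite Hcomp.
  unfold Rsum_range. replace (S m - r)%nat with (S (m - r)) by lia.
  rewrite (tech2 _ (r - 1) m) by lia. replace (S (r - 1)) with r by lia.
  rewrite sum_eq_R0, Rplus_0_l.
  - rewrite (fold_right_seq_sum (fun k => INR n ^ k * arctan_num m k * tan_num k r)).
    apply sum_eq. intros i _. unfold arctan_num, tan_num.
    rewrite (Derive_n_ext (fun z => (INR n * atan z) ^ (r + i) / INR (Factorial.fact (r + i)))
               (fun z => INR n ^ (r + i) * (atan z ^ (r + i) / INR (Factorial.fact (r + i))))),
      Derive_n_scal_l by (intros; rewrite Rpow_mult_distr; unfold Rdiv; ring).
    ring.
  - intros k Hk. rewrite (Derive_n_pow_at0 tan (PI / 2));
      [ring | apply PI2_RGT_0 | exact smooth_tan | exact tan_0 | lia].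
Qed.

Lemma cot_coeffs_taylor m n p r : (1 <= n)%nat -> (1 <= r <= m)%nat -> is_cot_coeffs m n p ->
  p r = INR m / INR r * taylor_coeff (fun z => tan (INR n * atan z) ^ r) m.
Proof.
  intros Hn Hr Hp. destruct m as [|M]; [lia|].
  destruct (sum_cot_pow_shifts n M Hn) as [c0 Hc0].
  set (a := fun s => INR (S M) / INR s * taylor_coeff (fun z => tan (INR n * atan z) ^ s) (S M)).
  assert (Hpa : forall r, (r <= S M)%nat -> p r = match r with 0%nat => c0 | _ => a r end).
  { apply polynomial_coeffs_unique. intros x.
    destruct (cot_PI2_sub_atan x) as [Hs Hcot].
    pose proof (Hp _ (not_multiple_PI _ Hs)) as Hpx.
    rewrite Rsum_range_0, Hcot, Scot_sum, Hc0 in Hpx by assumption.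
    unfold peval. rewrite <- Hpx, Hcot, (decomp_sum _ (S M)) by lia.
    rewrite pow_O, Rmult_1_r. reflexivity. }
  rewrite Hpa by lia. destruct r as [|r]; [lia | reflexivity].
Qed.

Theorem corollary6p7 (m n : nat) (p q : nat -> R) :
  (1 <= m)%nat -> (2 <= n)%nat ->
  is_cot_coeffs m n p ->
  is_cot_coeffs (2 * m) n q ->
  q 0%nat = Scot (2 * m) n (PI / 2) /\
  (forall r : nat, (1 <= r <= m)%nat ->
     p r = / (INR r * INR (Factorial.fact (m - 1))) *
           Rsum_range (fun k => (INR n) ^ k * arctan_num m k * tan_num k r) r m).
Proof.
  intros Hm Hn Hp Hq. split.
  - assert (Hs : sin (PI / 2) <> 0) by (rewrite sin_PI2; lra).
    rewrite (Hq (PI / 2) (not_multiple_PI _ Hs)), Rsum_range_0.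
    unfold cot. rewrite cos_PI2, Rdiv_0_l. fold (peval q (2 * m) 0). rewrite peval_0. reflexivity.
  - intros r Hr. rewrite (cot_coeffs_taylor m n p r) by (lia || assumption).
    unfold taylor_coeff. rewrite Derive_n_tan_pow_mul_atan by exact Hr.
    destruct m as [|M]; [lia|]. replace (S M - 1)%nat with M by lia.
    replace (Factorial.fact (S M)) with (S M * Factorial.fact M)%nat by reflexivity.
    rewrite mult_INR. field. split; [apply INR_fact_neq_0 | split; apply not_0_INR; lia].
Qed.
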